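(* Let $\Gamma$ be the graph with vertex set $\{v_{n,k}: n\in\mathbb Z,\ k\in\mathbb Z/10\mathbb Z\}$ and edge set $\{v_{n,k}v_{n,k+1}: n\in\mathbb Z, k\in\mathbb Z/10\mathbb Z\}\cup\{v_{n,2k+1}v_{n+1,4k+2}: n\in\mathbb Z, k\in\mathbb Z/10\mathbb Z\}$. Then $\Gamma$ is a cubic (3-regular), 2-ended, vertex-transitive graph which is not a Cayley graph (i.e. no subgroup of $\mathrm{Aut}(\Gamma)$ acts regularly on $V(\Gamma)$). In particular, there exists a cubic 2-ended vertex-transitive graph which is not a Cayley graph.
   Context: Indices $k$ are taken modulo 10. A graph is 2-ended if it has exactly two ends (equivalently here, it is quasi-isometric to $\mathbb Z$). *)

From Stdlib Require List.
From mathcomp Require Import all_boot all_order all_algebra.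
Set Implicit Arguments. Unset Strict Implicit. Unset Printing Implicit Defensive.
Import GRing.Theory.
Local Open Scope ring_scope.

Section Generic.
Variables (V : Type) (adj : V -> V -> Prop).

Definition cubic : Prop :=
  forall v, exists a b c : V,
    [/\ a <> b, a <> c & b <> c] /\ [/\ adj v a, adj v b & adj v c] /\
    (forall w, adj v w -> w = a \/ w = b \/ w = c).

Inductive conn_avoid (S : V -> Prop) : V -> V -> Prop :=
| ca_refl x : ~ S x -> conn_avoid S x x
| ca_step x y z : conn_avoid S x y -> adj y z -> ~ S z -> conn_avoid S x z.

Definition connected_graph : Prop :=
  forall x y, conn_avoid (fun _ => False) x y.

Definition finite_pred (P : V -> Prop) : Prop :=
  exists l : list V, forall x, P x -> List.In x l.

Definition in_inf_comp (S : list V) (x : V) : Prop :=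
  ~ List.In x S /\
  ~ finite_pred (fun y => conn_avoid (fun z => List.In z S) x y).

(* number of ends = sup over finite S of the number of infinite
   components of G - S; two-ended: connected and this sup equals 2 *)
Definition two_ended : Prop :=
  connected_graph /\
  (exists (S : list V) (x y : V),
      in_inf_comp S x /\ in_inf_comp S y /\
      ~ conn_avoid (fun z => List.In z S) x y) /\
  (forall (S : list V) (x y z : V),
      in_inf_comp S x -> in_inf_comp S y -> in_inf_comp S z ->
      conn_avoid (fun w => List.In w S) x y \/
      conn_avoid (fun w => List.In w S) x z \/
      conn_avoid (fun w => List.In w S) y z).

Definition is_aut (f : V -> V) : Prop :=
  (exists g : V -> V, (forall x, g (f x) = x) /\ (forall x, f (g x) = x)) /\
  (forall x y, adj x y <-> adj (f x) (f y)).

Definition vertex_transitive : Prop :=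
  forall u v, exists f, is_aut f /\ f u = v.

Definition aut_subgroup (H : (V -> V) -> Prop) : Prop :=
  [/\ (forall f, H f -> is_aut f),
      H (fun x => x),
      (forall f g, H f -> H g -> H (fun x => f (g x))) &
      (forall f, H f -> exists g, H g /\ forall x, g (f x) = x /\ f (g x) = x)].

Definition acts_regularly (H : (V -> V) -> Prop) : Prop :=
  forall u v, (exists f, H f /\ f u = v) /\
    (forall f g, H f -> H g -> f u = v -> g u = v -> forall x, f x = g x).

Definition is_cayley_graph : Prop :=
  exists H, aut_subgroup H /\ acts_regularly H.

End Generic.

Definition GVert := (int * 'Z_10)%type.

Definition Gamma_adj (a b : GVert) : Prop :=
  let: (n, k) := a in let: (m, l) := b in
  (m = n /\ (l = k + 1 \/ k = l + 1)) \/
  (exists j : 'Z_10,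
      (k = 2 * j + 1 /\ m = n + 1 /\ l = 4 * j + 2) \/
      (l = 2 * j + 1 /\ n = m + 1 /\ k = 4 * j + 2)).

(* The graph Gamma on Z x Z/10 consists of the 10-cycles (levels) {n} x Z/10
   together with the rungs joining v_{n,k}, k odd, to v_{n+1,2k}.  We prove
   that it is cubic, two-ended and vertex-transitive but not a Cayley graph.
   - General facts come first: automorphisms, a non-Cayley criterion (if the
     stabiliser of a vertex is {id, r} and r is the square of an automorphism,
     no subgroup acts regularly), and two-endedness of graphs graded by an
     integer height whose levels are finite and connected.
   - Gamma's neighbourhoods in closed form (nbrs, rung) give cubicity, and its
     levels satisfy the hypotheses of the two-endedness criterion.
   - Shifts, rotations, a flip and the reflection refv are automorphisms
     commuting with rung; together they act transitively.
   - Counting 8-cycles through v0 shows that automorphisms fixing v0 fix its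
     rung neighbour; by transitivity every automorphism commutes with rung, so
     the stabiliser of v0 is {id, refv}, and refv is the square of flip-then-
     shift. *)

From mathcomp Require Import all_boot all_order all_algebra.
From mathcomp Require Import zify.
From Stdlib Require Import Classical.
Set Implicit Arguments. Unset Strict Implicit. Unset Printing Implicit Defensive.
Import Order.TTheory GRing.Theory Num.Theory.
Local Open Scope ring_scope.

Section Automorphisms.
Variables (V : Type) (adj : V -> V -> Prop).

Lemma aut_of_inverse (f g : V -> V) :
  cancel f g -> cancel g f ->
  (forall x y, adj x y -> adj (f x) (f y)) ->
  (forall x y, adj x y -> adj (g x) (g y)) -> is_aut adj f.
Proof.
move=> fK gK f_adj g_adj; split; first by exists g.
by move=> x y; split=> [/f_adj|/g_adj]; rewrite ?fK.
Qed.

Lemma aut_inj f : is_aut adj f -> injective f.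
Proof. by case=> [[g [fK _]] _]; apply: can_inj fK. Qed.

Lemma aut_adj f x y : is_aut adj f -> adj x y -> adj (f x) (f y).
Proof. by case=> _ f_adj /f_adj. Qed.

Lemma aut_comp f g : is_aut adj f -> is_aut adj g -> is_aut adj (fun x => f (g x)).
Proof.
move=> [[f' [fK f'K]] f_adj] [[g' [gK g'K]] g_adj]; split.
  by exists (fun x => g' (f' x)); split=> x; rewrite ?fK ?gK ?g'K ?f'K.
by move=> x y; rewrite g_adj f_adj.
Qed.

Lemma aut_inverse f : is_aut adj f ->
  exists g, [/\ is_aut adj g, cancel f g & cancel g f].
Proof.
move=> [[g [fK gK]] f_adj]; exists g; split=> //; split; first by exists f.
by move=> x y; rewrite [adj (g x) _]f_adj !gK.
Qed.

Lemma aut_ext f g : (forall x, f x = g x) -> is_aut adj f -> is_aut adj g.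
Proof.
move=> fg [[f' [fK f'K]] f_adj]; split.
  by exists f'; split=> x; rewrite -?fg ?fK ?f'K.
by move=> x y; rewrite -!fg.
Qed.

(* Non-Cayley criterion: if the stabiliser of a vertex v0 in Aut is {id, r}
   with r <> id, and r = g o g for an automorphism g, then no subgroup H of Aut
   acts regularly: H would have to contain (a map equal to) r, which fixes v0
   without being the identity. *)
Lemma not_cayley_of_square_root (v0 x1 : V) (r g : V -> V) :
  is_aut adj g -> (forall x, g (g x) = r x) -> r v0 = v0 -> r x1 <> x1 ->
  (forall f, is_aut adj f -> f v0 = v0 -> (forall x, f x = x) \/ (forall x, f x = r x)) ->
  ~ is_cayley_graph adj.
Proof.
move=> g_aut g2 rv0 rx1 stab [H [[H_aut H1 H_comp H_inv] H_reg]].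
have r_aut : is_aut adj r by apply: aut_ext g2 (aut_comp g_aut g_aut).
have rK : involutive r.
  have := stab _ (aut_comp r_aut r_aut); rewrite /= !rv0 => /(_ erefl) [//|rrr].
  by case: rx1; apply: (aut_inj r_aut); rewrite rrr.
(* Since H is regular, every automorphism k factors as h or as h o r, h in H. *)
have factor k : is_aut adj k -> exists2 h, H h &
    (forall x, k x = h x) \/ (forall x, k x = h (r x)).
  move=> k_aut; have [h [Hh hv0]] := (H_reg v0 (k v0)).1.
  have [h' [Hh' h'K]] := H_inv h Hh.
  have := stab (fun x => h' (k x)) (aut_comp (H_aut h' Hh') k_aut).
  rewrite -hv0 (h'K v0).1 => /(_ erefl) [] q; exists h => //.
    by left=> x; rewrite -{2}(q x) (h'K _).2.
  by right=> x; rewrite -(q x) (h'K _).2.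
suff [f Hf fr] : exists2 f, H f & forall x, f x = r x.
  apply: rx1; have := (H_reg v0 v0).2 f _ Hf H1; rewrite fr rv0 => /(_ erefl erefl).
  by rewrite -fr.
have [h Hh [gh|ghr]] := factor g g_aut.
  by exists (fun x => h (h x)); [exact: H_comp | move=> x; rewrite -!gh].
have [h2 Hh2 [rh|rhr]] := factor (fun x => r (h x)) (aut_comp r_aut (H_aut h Hh)).
  have [h' [Hh' h'K]] := H_inv h Hh.
  by exists (fun x => h2 (h' x)); [exact: H_comp | move=> x; rewrite -rh (h'K x).2].
exists (fun x => h (h2 x)); first exact: H_comp.
by move=> x; rewrite -g2 -{1}(rK x) -rhr -ghr -ghr.
Qed.

End Automorphisms.

Section AvoidingPaths.
Variables (V : Type) (adj : V -> V -> Prop).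
Hypothesis adj_sym : forall x y, adj x y -> adj y x.
Notation CA S := (conn_avoid adj S).

Lemma ca_ends S x y : CA S x y -> ~ S x /\ ~ S y.
Proof. by elim=> [z nz|a b c _ [na _] _ nc]. Qed.

Lemma ca_trans S x y z : CA S x y -> CA S y z -> CA S x z.
Proof.
move=> Cxy Cyz; elim: Cyz Cxy => [//|a b c _ IH bc nc] /IH Cxb.
exact: ca_step Cxb bc nc.
Qed.

Lemma ca_edge S x y : ~ S x -> ~ S y -> adj x y -> CA S x y.
Proof. by move=> nx ny xy; apply: ca_step (ca_refl adj nx) xy ny. Qed.

Lemma ca_sym S x y : CA S x y -> CA S y x.
Proof.
elim=> [z nz|a b c Cab IH bc nc]; first exact: ca_refl.
have [_ nb] := ca_ends Cab.
exact: ca_trans (ca_edge nc nb (adj_sym bc)) IH.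
Qed.

Lemma ca_sub (S S' : V -> Prop) x y : (forall z, S z -> S' z) -> CA S' x y -> CA S x y.
Proof.
move=> SS'; elim=> [z nz|a b c _ IH bc nc]; first by apply: ca_refl => /SS'.
by apply: ca_step IH bc _ => /SS'.
Qed.

End AvoidingPaths.

(* Removing a level separates the levels above it from those
   below it (two ends); conversely, every infinite component of the complement
   of a finite set S escapes the band of levels meeting S and so contains the
   levels just above or just below it (at most two ends). *)
Section LevelledGraphs.
Variables (V : Type) (adj : V -> V -> Prop) (ht : V -> int) (lay : int -> list V).
Hypothesis adj_sym : forall x y, adj x y -> adj y x.
Hypothesis adj_ht : forall x y, adj x y -> `|ht y - ht x| <= 1.
Hypothesis layP : forall m x, List.In x (lay m) <-> ht x = m.
Hypothesis lay_conn : forall x y, ht y = ht x -> conn_avoid adj (fun z => ht z <> ht x) x y.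
Hypothesis lay_link : forall m, exists x y, [/\ adj x y, ht x = m & ht y = m + 1].
Notation CA S := (conn_avoid adj S).

Definition avoids (S : V -> Prop) (m : int) := forall z, ht z = m -> ~ S z.

Lemma level_inhabited m : exists z, ht z = m.
Proof. by have [x [_ [_ xm _]]] := lay_link m; exists x. Qed.

Lemma ca_level S x y : avoids S (ht x) -> ht y = ht x -> CA S x y.
Proof. by move=> Sx yx; apply: ca_sub (lay_conn yx) => z /[swap] zx; apply: Sx. Qed.

Lemma ca_up S x y : avoids S (ht x) -> avoids S (ht x + 1) -> ht y = ht x + 1 -> CA S x y.
Proof.
move=> Sx Sx1 yx; have [a [b [ab ax bx]]] := lay_link (ht x).
apply: ca_trans (ca_level Sx ax) _.
apply: ca_trans (ca_edge (Sx a ax) (Sx1 b bx) ab) _.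
by apply: ca_level; rewrite bx.
Qed.

Lemma ca_between S x y :
  (forall i, (ht x <= i <= ht y) || (ht y <= i <= ht x) -> avoids S i) -> CA S x y.
Proof.
wlog le_xy : x y / ht x <= ht y.
  move=> gen Sxy; case: (lerP (ht x) (ht y)) => [le_xy|/ltW le_yx]; first exact: gen.
  by apply: (ca_sym adj_sym); apply: gen => // i Hi; apply: Sxy; rewrite orbC.
move=> Sxy; have [d yxd] : exists d : nat, ht y = ht x + d%:Z by exists `|ht y - ht x|%N; lia.
elim: d y le_xy yxd Sxy => [|d IH] y _ yxd Sxy.
  by apply: ca_level; [apply: Sxy; rewrite lexx; lia | lia].
have [z zd] := level_inhabited (ht x + d%:Z).
have Cxz : CA S x z by apply: IH => [|//|i /orP[] ?]; [lia | apply: Sxy; lia..].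
apply: ca_trans Cxz (ca_up _ _ _); rewrite zd; [apply: Sxy.. | ]; lia.
Qed.

Lemma ca_above S m x y : (forall z, ht z = m -> S z) -> CA S x y -> m < ht x -> m < ht y.
Proof.
move=> Sm; elim=> [//|a b c _ IH bc nc] /IH mb.
have := adj_ht bc; have : ht c != m by apply/eqP => /Sm.
lia.
Qed.

Definition height_bound (l : list V) : nat := foldr (fun v b => maxn `|ht v| b) 0%N l.

Lemma height_bound_ge l v : List.In v l -> (`|ht v| <= height_bound l)%N.
Proof.
elim: l => [|a l IH] //= [->|/IH le_vl]; first exact: leq_maxl.
exact: leq_trans le_vl (leq_maxr _ _).
Qed.

Lemma avoids_high l m : (height_bound l < `|m|)%N -> avoids (fun z => List.In z l) m.
Proof. by move=> lt_lm z zm /height_bound_ge; rewrite zm leqNgt lt_lm. Qed.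

Definition slab (B : nat) : list V :=
  List.flat_map (fun i : nat => lay (i%:Z - B%:Z)) (List.seq 0 (B + B).+1).

Lemma slabP B z : (`|ht z| <= B)%N -> List.In z (slab B).
Proof.
move=> le_zB; apply/List.in_flat_map; exists (absz (ht z + B%:Z)).
by split; [apply/List.in_seq | apply/layP]; lia.
Qed.

Lemma inf_comp_escapes l x : in_inf_comp adj l x ->
  exists2 y, CA (fun z => List.In z l) x y & (height_bound l < `|ht y|)%N.
Proof.
move=> [_ infinite]; apply: NNPP => none; apply: infinite.
exists (slab (height_bound l)) => y Cxy; apply: slabP; rewrite leqNgt; apply/negP => lt_ly.
by apply: none; exists y.
Qed.

Lemma at_most_two_ends l : exists t b, forall x, in_inf_comp adj l x ->
  CA (fun z => List.In z l) x t \/ CA (fun z => List.In z l) x b.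
Proof.
set B := height_bound l.
have [t tB] := level_inhabited (B.+1)%:Z; have [b bB] := level_inhabited (- (B.+1)%:Z).
exists t, b => x /inf_comp_escapes [y Cxy lt_By].
case: (lerP 0 (ht y)) => y0; [left|right]; apply: ca_trans Cxy (ca_between _) => i Hi;
  apply: avoids_high; lia.
Qed.

Lemma off_level0_infinite x : ht x != 0 -> in_inf_comp adj (lay 0) x.
Proof.
move=> x0; have avoid0 i : i != 0 -> avoids (fun z => List.In z (lay 0)) i.
  by move=> i0 z zi /layP; apply/eqP; rewrite zi.
split; first by move/layP/eqP; rewrite (negbTE x0).
move=> [L HL]; set B := height_bound L.
have [z zB] := level_inhabited (if 0 < ht x then ht x + (B.+1)%:Z else ht x - (B.+1)%:Z).
suff /HL /height_bound_ge : CA (fun z => List.In z (lay 0)) x z by case: ltrP zB; lia.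
by apply: ca_between => i Hi; apply: avoid0; case: ltrP zB x0 Hi; lia.
Qed.

Theorem levelled_two_ended : two_ended adj.
Proof.
split; [|split].
- by move=> x y; apply: ca_between => i _ z _.
- have [x x1] := level_inhabited 1; have [y y1] := level_inhabited (-1).
  exists (lay 0), x, y; split; [|split]; try by apply: off_level0_infinite; rewrite ?x1 ?y1.
  by move=> /(ca_above (fun z => proj2 (layP 0 z))); rewrite x1 y1 => /(_ erefl).
- move=> l x y z; have [t [b tb]] := at_most_two_ends l.
  have join u v w : CA (fun z => List.In z l) u w -> CA (fun z => List.In z l) v w ->
      CA (fun z => List.In z l) u v.
    by move=> uw vw; apply: ca_trans uw (ca_sym adj_sym vw).
  move=> /tb [xt|xb] /tb [yt|yb] /tb [zt|zb];
    solve [left; eapply join; eassumption | right; left; eapply join; eassumption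
           | right; right; eapply join; eassumption].
Qed.

End LevelledGraphs.

Definition Z10 : seq 'Z_10 := [seq inZp i | i <- iota 0 10].

Lemma Z10P (k : 'Z_10) : k \in Z10.
Proof. by apply/mapP; exists (val k); [rewrite mem_iota /=; case: k | rewrite valZpK]. Qed.

Lemma Z10_all (P : pred 'Z_10) : all P Z10 -> forall k, P k.
Proof. by move=> /allP allP k; apply: allP (Z10P k). Qed.

Lemma Z10_all2 (P : 'Z_10 -> pred 'Z_10) :
  all (fun k => all (P k) Z10) Z10 -> forall k l, P k l.
Proof. by move=> /Z10_all allP k; apply: Z10_all. Qed.

(* Parity of the representative in [0, 10); it is compatible with addition
   and negation because 10 is even. *)
Definition oddz (k : 'Z_10) : bool := odd k.

Lemma oddzN k : oddz (- k) = oddz k.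
Proof. by apply/eqP; move: k; apply: Z10_all; vm_compute. Qed.

Lemma oddzD k l : oddz (k + l) = oddz k (+) oddz l.
Proof. by apply/eqP; move: k l; apply: Z10_all2; vm_compute. Qed.

Lemma evenzM a y : ~~ oddz a -> ~~ oddz (a * y).
Proof. by apply/implyP; move: a y; apply: Z10_all2; vm_compute. Qed.

Lemma even_halfK x : ~~ oddz x -> x = 2 * (3 * x).
Proof.
move=> even_x; apply/eqP; move: even_x; apply/implyP.
by move: x; apply: Z10_all; vm_compute.
Qed.

Lemma succz_neq_predz (k : 'Z_10) : k + 1 != k - 1.
Proof. by move: k; apply: Z10_all; vm_compute. Qed.

Definition succv (u : GVert) : GVert := (u.1, u.2 + 1).
Definition predv (u : GVert) : GVert := (u.1, u.2 - 1).
Definition rung (u : GVert) : GVert :=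
  if oddz u.2 then (u.1 + 1, 2 * u.2) else (u.1 - 1, 3 * u.2 + 5).
Definition nbrs (u : GVert) : seq GVert := [:: succv u; predv u; rung u].

Lemma up_edge_spec (k l : 'Z_10) :
  (exists j : 'Z_10, k = 2 * j + 1 /\ l = 4 * j + 2) <-> oddz k /\ l = 2 * k.
Proof.
have /(_ k l) /eqP spec := @Z10_all2 (fun k l =>
  has (fun j => (k == 2 * j + 1) && (l == 4 * j + 2)) Z10 == oddz k && (l == 2 * k))
  ltac:(by vm_compute).
split=> [[j [kj lj]]|[odd_k lk]].
  have : has (fun j => (k == 2 * j + 1) && (l == 4 * j + 2)) Z10.
    by apply/hasP; exists j; rewrite ?Z10P // kj lj !eqxx.
  by rewrite spec => /andP[-> /eqP].
have : oddz k && (l == 2 * k) by rewrite odd_k lk eqxx.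
by rewrite -spec => /hasP[j _ /andP[/eqP kj /eqP lj]]; exists j.
Qed.

Lemma down_edge_spec (k l : 'Z_10) : oddz l /\ k = 2 * l <-> ~~ oddz k /\ l = 3 * k + 5.
Proof.
have /(_ k l) /eqP spec := @Z10_all2 (fun k l =>
  (oddz l && (k == 2 * l)) == (~~ oddz k && (l == 3 * k + 5))) ltac:(by vm_compute).
by split=> [[odd_l kl]|[even_k lk]];
  [move: spec; rewrite odd_l kl eqxx => /esym/andP[-> /eqP] |
   move: spec; rewrite even_k lk eqxx => /andP[-> /eqP]].
Qed.

Lemma rung_edge_spec (n m : int) (k l : 'Z_10) :
  (exists j : 'Z_10, (k = 2 * j + 1 /\ m = n + 1 /\ l = 4 * j + 2) \/
                     (l = 2 * j + 1 /\ n = m + 1 /\ k = 4 * j + 2)) <->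
  (oddz k /\ m = n + 1 /\ l = 2 * k) \/ (~~ oddz k /\ m = n - 1 /\ l = 3 * k + 5).
Proof.
split=> [[j [[kj [mn lj]]|[lj [nm kj]]]]|[[odd_k [mn lk]]|[even_k [mn lk]]]].
- by left; have [] := (up_edge_spec k l).1 (ex_intro _ j (conj kj lj)).
- right; have [odd_l kl] := (up_edge_spec l k).1 (ex_intro _ j (conj lj kj)).
  by have [] := (down_edge_spec k l).1 (conj odd_l kl); split=> //; split=> //; lia.
- have [j [kj lj]] := (up_edge_spec k l).2 (conj odd_k lk).
  by exists j; left.
- have [odd_l kl] := (down_edge_spec k l).2 (conj even_k lk).
  have [j [lj kj]] := (up_edge_spec l k).2 (conj odd_l kl).
  by exists j; right; split=> //; split=> //; lia.
Qed.

Lemma adj_nbrs u w : Gamma_adj u w <-> w \in nbrs u.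
Proof.
case: u w => n k [m l]; rewrite /Gamma_adj /nbrs /succv /predv /rung /= !inE !xpair_eqE.
have predE : (k = l + 1) <-> (l = k - 1) by split=> ->; rewrite ?addrK ?subrK.
rewrite rung_edge_spec predE; case: (oddz k) => /=; split.
- by case=> [[-> [->|->]]|[[? [-> ->]]|[? [-> ->]]]]; rewrite ?eqxx ?orbT.
- case/or3P=> [/andP[/eqP-> /eqP->]|/andP[/eqP-> /eqP->]|/eqP[-> ->]].
  + by left; split; [|left].
  + by left; split; [|right].
  + by right; left.
- by case=> [[-> [->|->]]|[[? [-> ->]]|[? [-> ->]]]]; rewrite ?eqxx ?orbT.
- case/or3P=> [/andP[/eqP-> /eqP->]|/andP[/eqP-> /eqP->]|/eqP[-> ->]].
  + by left; split; [|left].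
  + by left; split; [|right].
  + by right; right.
Qed.

Lemma Gamma_sym u w : Gamma_adj u w -> Gamma_adj w u.
Proof.
case: u w => n k [m l] [[-> [kl|kl]]|[j [e|e]]].
- by left; split; [|right].
- by left; split; [|left].
- by right; exists j; right.
- by right; exists j; left.
Qed.

Lemma adj_succ u : Gamma_adj u (succv u).
Proof. by apply/adj_nbrs; rewrite !inE eqxx. Qed.

Lemma adj_pred u : Gamma_adj u (predv u).
Proof. by apply/adj_nbrs; rewrite !inE eqxx orbT. Qed.

Lemma adj_rung u : Gamma_adj u (rung u).
Proof. by apply/adj_nbrs; rewrite !inE eqxx !orbT. Qed.

Lemma rung_odd n k : oddz k -> rung (n, k) = (n + 1, 2 * k).
Proof. by rewrite /rung /= => ->. Qed.

Lemma rung_level u : `|(rung u).1 - u.1| = 1.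
Proof. by rewrite /rung; case: ifP => _ /=; lia. Qed.

Lemma rung_off_level u v : v.1 = u.1 -> rung u <> v.
Proof. by move=> vu ruv; have := rung_level u; rewrite ruv vu subrr. Qed.

Lemma rung_spec (k : 'Z_10) : if oddz k then ~~ oddz (2 * k) && (3 * (2 * k) + 5 == k)
                              else oddz (3 * k + 5) && (2 * (3 * k + 5) == k).
Proof. by move: k; apply: Z10_all; vm_compute. Qed.

Lemma rung_parity u : oddz (rung u).2 = ~~ oddz u.2.
Proof.
case: u => n k; have := rung_spec k; rewrite /rung /=.
by case: (oddz k) => /andP[parity _]; rewrite ?(negbTE parity) ?parity.
Qed.

Lemma rungK : involutive rung.
Proof.
move=> [n k]; have := rung_spec k; rewrite /rung /=.
by case: (oddz k) => /andP[parity /eqP->] /=; rewrite ?(negbTE parity) ?parity; congr pair; lia.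
Qed.

Lemma Gamma_cubic : cubic Gamma_adj.
Proof.
move=> u; exists (succv u), (predv u), (rung u).
split; [split|split; [split; [exact: adj_succ|exact: adj_pred|exact: adj_rung]|]].
- by rewrite /succv /predv => -[] /eqP; apply/negP; exact: succz_neq_predz.
- by move/esym; apply: rung_off_level.
- by move/esym; apply: rung_off_level.
- by move=> w /adj_nbrs; rewrite !inE => /or3P[] /eqP->; auto.
Qed.

Lemma In_mem (T : eqType) (x : T) (s : seq T) : List.In x s <-> x \in s.
Proof.
elim: s => [|y s IH] //=; rewrite inE; split.
- by case=> [->|/IH ->]; rewrite ?eqxx ?orbT.
- by case/orP=> [/eqP->|/IH]; [left|right].
Qed.

Definition level (m : int) : list GVert := [seq (m, k) | k <- Z10].

Lemma levelP m x : List.In x (level m) <-> x.1 = m.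
Proof.
rewrite In_mem; split=> [/mapP[k _ ->] //|]; case: x => n k /= ->.
exact: map_f (Z10P k).
Qed.

Lemma Gamma_adj_level x y : Gamma_adj x y -> `|y.1 - x.1| <= 1.
Proof. by move/adj_nbrs; rewrite !inE => /or3P[] /eqP->; rewrite ?rung_level //= subrr. Qed.

Lemma level_connected x y :
  y.1 = x.1 -> conn_avoid Gamma_adj (fun z => z.1 <> x.1) x y.
Proof.
case: x y => n k [m l] /= ->.
have walk (t : nat) : conn_avoid Gamma_adj (fun z => z.1 <> n) (n, k) (n, k + t%:R).
  elim: t => [|t IH]; first by rewrite addr0; apply: ca_refl => /(_ erefl).
  rewrite -natr1 addrA; apply: ca_step IH (adj_succ _) _.
  by move/(_ erefl).
by have := walk (val (l - k)); rewrite natr_Zp addrC subrK.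
Qed.

Lemma level_link m : exists x y, [/\ Gamma_adj x y, x.1 = m & y.1 = m + 1].
Proof.
exists (m, 1), (m + 1, 2); have -> : (m + 1, 2) = rung (m, 1) by rewrite rung_odd // mulr1.
by split=> //; exact: adj_rung.
Qed.

Lemma Gamma_two_ended : two_ended Gamma_adj.
Proof.
exact: (levelled_two_ended Gamma_sym Gamma_adj_level levelP level_connected level_link).
Qed.

(* A map preserves adjacency as soon as it maps the cycle edges u -- succv u
   and the upward rungs (n, k) -- (n + 1, 2k), k odd, to edges: every edge is
   of one of these two forms, up to orientation. *)
Lemma edge_preserving (F : GVert -> GVert) :
  (forall u, Gamma_adj (F u) (F (succv u))) ->
  (forall n k, oddz k -> Gamma_adj (F (n, k)) (F (n + 1, 2 * k))) ->
  forall u w, Gamma_adj u w -> Gamma_adj (F u) (F w).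
Proof.
move=> F_succ F_up.
have F_rung u : oddz u.2 -> Gamma_adj (F u) (F (rung u)).
  by case: u => n k odd_k; rewrite rung_odd //; apply: F_up.
move=> u w /adj_nbrs; rewrite !inE => /or3P[] /eqP->.
- exact: F_succ.
- apply: Gamma_sym; rewrite -{2}[u](_ : succv (predv u) = u); first exact: F_succ.
  by case: u => n k; rewrite /succv /predv /= subrK.
- case: (boolP (oddz u.2)) => [/F_rung //|even_u].
  by apply: Gamma_sym; rewrite -{2}(rungK u); apply: F_rung; rewrite rung_parity.
Qed.

Definition rung_aut (f : GVert -> GVert) : Prop :=
  is_aut Gamma_adj f /\ forall x, f (rung x) = rung (f x).

(* An automorphism acting injectively on levels commutes with rung, since
   rung x is the only neighbour of x outside its level. *)
Lemma rung_aut_of_levels f :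
  is_aut Gamma_adj f -> (forall x y, (f x).1 = (f y).1 -> x.1 = y.1) -> rung_aut f.
Proof.
move=> f_aut f_lev; split=> // x.
have /adj_nbrs := aut_adj f_aut (adj_rung x); rewrite !inE => /or3P[] /eqP // same.
all: by have := rung_level x; rewrite (f_lev _ _ (congr1 fst same)) subrr.
Qed.

Lemma rung_aut_comp f g : rung_aut f -> rung_aut g -> rung_aut (fun x => f (g x)).
Proof.
move=> [f_aut f_rung] [g_aut g_rung].
by split=> [|x]; [exact: aut_comp | rewrite g_rung f_rung].
Qed.

Lemma rung_aut_inv f : rung_aut f -> exists g, [/\ rung_aut g, cancel f g & cancel g f].
Proof.
move=> [f_aut f_rung]; have [g [g_aut fK gK]] := aut_inverse f_aut.
by exists g; split=> //; split=> // x; apply: (aut_inj f_aut); rewrite f_rung !gK.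
Qed.

Definition shiftv (c : int) (u : GVert) : GVert := (u.1 + c, u.2).

Lemma shiftv_edges c u w : Gamma_adj u w -> Gamma_adj (shiftv c u) (shiftv c w).
Proof.
move: u w; apply: edge_preserving => [u|n k odd_k]; first exact: adj_succ.
by have := adj_rung (n + c, k); rewrite rung_odd // /shiftv /= addrAC.
Qed.

Lemma shiftv_rung_aut c : rung_aut (shiftv c).
Proof.
apply: rung_aut_of_levels => [|x y /=]; last by move/addIr.
apply: (aut_of_inverse (g := shiftv (- c))) => [[n k]|[n k]||];
  by [rewrite /shiftv /= ?addrK ?subrK | exact: shiftv_edges].
Qed.

(* Rotation of level n by a * 2^n (a even); on even residues 2 is invertible
   with inverse 3, which gives a meaning to 2^n for negative n. *)
Definition pw (n : int) : 'Z_10 := match n with Posz m => 2 ^+ m | Negz m => 3 ^+ m.+1 end.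

Lemma pw_succ a n : ~~ oddz a -> a * pw (n + 1) = 2 * (a * pw n).
Proof.
move=> even_a; case: n => [m|[|m]].
- have -> : Posz m + 1 = Posz m.+1 by lia.
  by rewrite /= exprS mulrCA.
- have -> : Negz 0 + 1 = 0 by [].
  by rewrite /= expr0 expr1 mulr1 [a * 3]mulrC; apply: even_halfK.
- have -> : Negz m.+1 + 1 = Negz m by rewrite !NegzE; lia.
  rewrite /= [3 ^+ m.+2]exprS [a * (3 * _)]mulrCA; apply: even_halfK; exact: evenzM.
Qed.

Definition rotv (a : 'Z_10) (u : GVert) : GVert := (u.1, u.2 + a * pw u.1).

Lemma rotv_edges a u w : ~~ oddz a -> Gamma_adj u w -> Gamma_adj (rotv a u) (rotv a w).
Proof.
move=> even_a; move: u w; apply: edge_preserving => [[n k]|n k odd_k].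
  by have := adj_succ (rotv a (n, k)); rewrite /rotv /succv /= addrAC.
have odd_k' : oddz (k + a * pw n) by rewrite oddzD odd_k (negbTE (evenzM _ even_a)).
by have := adj_rung (rotv a (n, k)); rewrite rung_odd // /rotv /= pw_succ // mulrDr.
Qed.

Lemma rotv_rung_aut a : ~~ oddz a -> rung_aut (rotv a).
Proof.
move=> even_a; apply: rung_aut_of_levels => [|x y] //.
have even_Na : ~~ oddz (- a) by rewrite oddzN.
apply: (aut_of_inverse (g := rotv (- a))) => [[n k]|[n k]|u w|u w];
  by [rewrite /rotv /= mulNr ?addrK ?subrK | exact: rotv_edges].
Qed.

Definition sgn10 (n : int) : 'Z_10 := if odd `|n| then -1 else 1.

Lemma sgn10_cases n : sgn10 n = 1 \/ sgn10 n = -1.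
Proof. by rewrite /sgn10; case: ifP; [right|left]. Qed.

Lemma sgn10_succ n : sgn10 (n + 1) = - sgn10 n.
Proof.
rewrite /sgn10; have -> : odd `|n + 1| = ~~ odd `|n|.
  case: n => m.
    have -> : Posz m + 1 = Posz m.+1 by lia.
    done.
  have -> : Negz m + 1 = - m%:Z by rewrite NegzE; lia.
  by rewrite abszN /= negbK.
by case: (odd `|n|); rewrite /= ?opprK.
Qed.

Lemma sgn10N n : sgn10 (- n) = sgn10 n.
Proof. by rewrite /sgn10 abszN. Qed.

Definition flipv (u : GVert) : GVert := (- u.1, sgn10 u.1 * u.2 + 5).

(* On odd k, the flipped upward rung from (n, k) is a downward rung. *)
Lemma flip_spec (k : 'Z_10) : oddz k ->
  [&& oddz (- (2 * k) + 5), 2 * (- (2 * k) + 5) == k + 5,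
      oddz (2 * k + 5) & 2 * (2 * k + 5) == - k + 5].
Proof. by apply/implyP; move: k; apply: Z10_all; vm_compute. Qed.

Lemma flipv_edges u w : Gamma_adj u w -> Gamma_adj (flipv u) (flipv w).
Proof.
move: u w; apply: edge_preserving => [[n k]|n k odd_k].
  rewrite /flipv /=; case: (sgn10_cases n) => ->.
    by have := adj_succ (- n, 1 * k + 5); rewrite /succv /= mulrDr mulr1 addrAC.
  by have := adj_pred (- n, -1 * k + 5); rewrite /predv /= mulrDr mulr1 addrAC.
have /and4P[odd1 /eqP e1 odd2 /eqP e2] := flip_spec odd_k.
apply: Gamma_sym; rewrite /flipv /= sgn10_succ.
case: (sgn10_cases n) => ->; rewrite ?opprK mulN1r mul1r.
  by have := adj_rung (- (n + 1), - (2 * k) + 5); rewrite rung_odd //= e1 opprD subrK.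
by have := adj_rung (- (n + 1), 2 * k + 5); rewrite rung_odd //= e2 opprD subrK.
Qed.

Lemma flipvK : involutive flipv.
Proof.
move=> [n k]; rewrite /flipv /= opprK sgn10N; congr pair.
case: (sgn10_cases n) => ->; last by rewrite !mulN1r opprD opprK addrNK.
by rewrite !mul1r -addrA (_ : 5 + 5 = 0) ?addr0 //; apply/eqP; vm_compute.
Qed.

Lemma flipv_rung_aut : rung_aut flipv.
Proof.
apply: rung_aut_of_levels => [|x y /= /oppr_inj //].
by apply: (aut_of_inverse (g := flipv)); [exact: flipvK | exact: flipvK | exact: flipv_edges..].
Qed.

Definition refv (u : GVert) : GVert := (u.1, - u.2).

Lemma refvK : involutive refv.
Proof. by move=> [n k]; rewrite /refv /= opprK. Qed.

Lemma refv_edges u w : Gamma_adj u w -> Gamma_adj (refv u) (refv w).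
Proof.
move: u w; apply: edge_preserving => [[n k]|n k odd_k].
  by have := adj_pred (refv (n, k)); rewrite /refv /predv /= opprD.
by have := adj_rung (refv (n, k)); rewrite rung_odd /refv /= ?oddzN // mulrN.
Qed.

Lemma refv_rung_aut : rung_aut refv.
Proof.
apply: rung_aut_of_levels => [|x y] //.
by apply: (aut_of_inverse (g := refv)); [exact: refvK | exact: refvK | exact: refv_edges..].
Qed.

Definition v0 : GVert := (0, 0).

(* Every vertex is the image of v0 under a rung-commuting automorphism:
   rotations reach the even residues of level 0, the flip followed by a
   rotation the odd ones, and shifts the other levels. *)
Lemma rung_aut_from_v0 u : exists2 f, rung_aut f & f v0 = u.
Proof.
case: u => n k; case: (boolP (oddz k)) => [odd_k|even_k].
  have even_k5 : ~~ oddz (k - 5) by rewrite oddzD oddzN odd_k.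
  exists (fun x => shiftv n (rotv (k - 5) (flipv x))).
    apply: rung_aut_comp; first exact: shiftv_rung_aut.
    by apply: rung_aut_comp; [exact: rotv_rung_aut | exact: flipv_rung_aut].
  by rewrite /flipv /rotv /shiftv /= mulr0 add0r mulr1 add0r addrC subrK.
exists (fun x => shiftv n (rotv k x)).
  by apply: rung_aut_comp; [exact: shiftv_rung_aut | exact: rotv_rung_aut].
by rewrite /rotv /shiftv /= mulr1 !add0r.
Qed.

Lemma rung_aut_transitive u w : exists2 f, rung_aut f & f u = w.
Proof.
have [f f_aut f0u] := rung_aut_from_v0 u; have [g g_aut g0w] := rung_aut_from_v0 w.
have [f' [f'_aut fK _]] := rung_aut_inv f_aut.
by exists (fun x => g (f' x)); [exact: rung_aut_comp | rewrite -f0u fK].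
Qed.

Lemma Gamma_vertex_transitive : vertex_transitive Gamma_adj.
Proof. by move=> u w; have [f [f_aut _] fuw] := rung_aut_transitive u w; exists f. Qed.

Definition adjb (u w : GVert) : bool := w \in nbrs u.

Fixpoint walks (x : GVert) (n : nat) : seq (seq GVert) :=
  if n is n'.+1 then flatten [seq [seq w :: p | p <- walks w n'] | w <- nbrs x]
  else [:: [::]].

Lemma walks_complete n x p : size p = n -> path adjb x p -> p \in walks x n.
Proof.
elim: n x p => [|n IH] x [|w p] // [size_p] /andP[xw wp].
by apply/flatten_mapP; exists w => //; apply: map_f; apply: IH.
Qed.

(* Paths x, p_1, ..., p_6 = y through distinct vertices avoiding v0; for
   neighbours x, y of v0 they close x -- v0 -- y into an 8-cycle. *)
Definition octapath (x y : GVert) (p : seq GVert) : bool :=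
  [&& size p == 6%N, path adjb x p, last x p == y & uniq (v0 :: x :: p)].

Definition npaths (x y : GVert) : nat := size (undup (filter (octapath x y) (walks x 6%N))).

Lemma octapath_aut h x y p : is_aut Gamma_adj h -> h v0 = v0 ->
  octapath x y p -> octapath (h x) (h y) (map h p).
Proof.
move=> h_aut h0 /and4P[/eqP size_p xp /eqP last_p uniq_p].
have h_path z q : path adjb z q -> path adjb (h z) (map h q).
  elim: q z => [|w q IH] z //= /andP[/adj_nbrs zw wq].
  by rewrite IH // andbT; apply/adj_nbrs; exact: aut_adj.
rewrite /octapath size_map size_p (h_path _ _ xp) last_map last_p !eqxx /=.
by move: uniq_p; rewrite -(map_inj_uniq (aut_inj h_aut)) /= h0.
Qed.

Lemma size_undup_inj (T : eqType) (f : T -> T) (s t : seq T) :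
  injective f -> (forall x, x \in s -> f x \in t) -> (size (undup s) <= size (undup t))%N.
Proof.
move=> f_inj st; rewrite -(size_map f); apply: uniq_leq_size.
  by rewrite (map_inj_uniq f_inj) undup_uniq.
by move=> y /mapP[x]; rewrite mem_undup => /st fx ->; rewrite mem_undup.
Qed.

Lemma npaths_aut h x y : is_aut Gamma_adj h -> h v0 = v0 ->
  (npaths x y <= npaths (h x) (h y))%N.
Proof.
move=> h_aut h0; rewrite /npaths; apply: (size_undup_inj (inj_map (aut_inj h_aut))) => p.
rewrite !mem_filter => /andP[xyp _]; have hxyp := octapath_aut h_aut h0 xyp.
by rewrite hxyp; case/and4P: (hxyp) => /eqP size_hp hp _ _; apply: walks_complete.
Qed.

Lemma npaths_v0 : (4 <= npaths (succv v0) (predv v0))%N &&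
  all (fun y => (npaths (rung v0) y < 4) && (npaths y (rung v0) < 4))%N (nbrs v0).
Proof. by vm_compute. Qed.

Lemma stab_fixes_rung h : is_aut Gamma_adj h -> h v0 = v0 -> h (rung v0) = rung v0.
Proof.
move=> h_aut h0; have /andP[many /allP few] := npaths_v0.
have h_nbr x : x \in nbrs v0 -> h x \in nbrs v0.
  by move=> /adj_nbrs v0x; apply/adj_nbrs; rewrite -h0; exact: aut_adj.
have many_h := leq_trans many (npaths_aut _ _ h_aut h0).
have [hs_r hp_r] : h (succv v0) != rung v0 /\ h (predv v0) != rung v0.
  have /andP[few_p _] := few _ (h_nbr (predv v0) ltac:(by rewrite !inE eqxx orbT)).
  have /andP[_ few_s] := few _ (h_nbr _ (mem_head _ _)).
  by split; apply/eqP=> hr; [move: few_p | move: few_s]; rewrite -hr ltnNge many_h.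
have [g [g_aut hK gK]] := aut_inverse h_aut.
have g0 : g v0 = v0 by rewrite -{1}h0 hK.
have /adj_nbrs := aut_adj g_aut (adj_rung v0); rewrite g0 !inE => /or3P[] /eqP g_r.
- by move: hs_r; rewrite -g_r gK eqxx.
- by move: hp_r; rewrite -g_r gK eqxx.
- by rewrite -{1}g_r gK.
Qed.

(* Every automorphism commutes with rung: conjugating by rung-commuting
   automorphisms reduces this to automorphisms fixing v0. *)
Lemma aut_rung h : is_aut Gamma_adj h -> forall x, h (rung x) = rung (h x).
Proof.
move=> h_aut x.
have [t [t_aut t_rung] t0] := rung_aut_from_v0 x.
have [s [s_aut s_rung] s_hx] := rung_aut_transitive (h x) v0.
have k_aut := aut_comp s_aut (aut_comp h_aut t_aut).
have := stab_fixes_rung k_aut; rewrite /= t0 s_hx => /(_ erefl).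
by rewrite t_rung t0 -s_hx -s_rung => /(aut_inj s_aut).
Qed.

Lemma succv2_neq u : succv (succv u) <> u.
Proof. by case: u => n k [] /eqP; apply/negP; move: k; apply: Z10_all; vm_compute. Qed.

(* An automorphism fixing two consecutive vertices of a level fixes the next one:
   its image is a neighbour of the middle vertex, neither the first vertex nor
   the rung end. *)
Lemma fix_next h u : is_aut Gamma_adj h -> h u = u -> h (succv u) = succv u ->
  h (succv (succv u)) = succv (succv u).
Proof.
move=> h_aut hu hs.
have /adj_nbrs := aut_adj h_aut (adj_succ (succv u)); rewrite hs !inE.
case/or3P=> /eqP hss //.
  case: (@succv2_neq u); apply: (aut_inj h_aut); rewrite hss hu.
  by case: u {hu hs hss} => n k; rewrite /predv /succv /= addrK.
case: (@rung_off_level (succv u) (succv (succv u))) => //; apply: (aut_inj h_aut).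
  by rewrite hss (aut_rung h_aut) hs.
Qed.

Lemma fix_level h u : is_aut Gamma_adj h -> h u = u -> h (succv u) = succv u ->
  forall l, h (u.1, l) = (u.1, l).
Proof.
case: u => m k h_aut; rewrite /succv /= => hu hs.
suff fixed t : h (m, k + t%:R) = (m, k + t%:R) /\ h (m, k + t.+1%:R) = (m, k + t.+1%:R).
  by move=> l; have := (fixed (val (l - k))).1; rewrite natr_Zp addrC subrK.
elim: t => [|t [fix_t fix_t1]]; first by rewrite addr0 -[1%:R]/1.
have succ_t j : k + j.+1%:R = k + j%:R + 1 by rewrite -natr1 addrA.
rewrite !succ_t in fix_t1 *; split=> //.
exact: (fix_next h_aut fix_t fix_t1).
Qed.

Lemma common_nbr u w : Gamma_adj u w -> Gamma_adj (succv (succv u)) w -> w = succv u.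
Proof.
move=> /adj_nbrs + /adj_nbrs; rewrite !inE => /or3P[] /eqP-> //.
  case: u => m k; rewrite /succv /predv /rung /= !xpair_eqE eqxx /=.
  have [ne1 ne2] : k - 1 != k + 1 + 1 + 1 /\ k - 1 != k + 1 + 1 - 1.
    by split; move: k; apply: Z10_all; vm_compute.
  by rewrite (negbTE ne1) (negbTE ne2) /=; case: ifP => _ /eqP[] /eqP; lia.
case/or3P=> /eqP ru; exfalso.
- by move: ru; apply: rung_off_level.
- by move: ru; apply: rung_off_level.
- by case: (@succv2_neq u); apply: (inv_inj rungK); rewrite ru.
Qed.

Lemma fix_middle h u : is_aut Gamma_adj h -> h u = u ->
  h (succv (succv u)) = succv (succv u) -> h (succv u) = succv u.
Proof.
move=> h_aut hu hss; apply: common_nbr.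
  by rewrite -{1}hu; apply: aut_adj h_aut (adj_succ u).
by rewrite -{1}hss; apply: aut_adj h_aut (Gamma_sym (adj_succ _)).
Qed.

Definition fixes_level (h : GVert -> GVert) (m : int) := forall l, h (m, l) = (m, l).

Lemma fix_level_up h m : is_aut Gamma_adj h -> fixes_level h m -> fixes_level h (m + 1).
Proof.
move=> h_aut fix_m.
have fix_rung l : h (rung (m, l)) = rung (m, l) by rewrite aut_rung // fix_m.
have u0 : h (m + 1, 0) = (m + 1, 0).
  by have := fix_rung 5; rewrite rung_odd //; congr (h (_, _) = (_, _)); apply/eqP; vm_compute.
have u2 : h (succv (succv (m + 1, 0))) = succv (succv (m + 1, 0)).
  by have := fix_rung 1; rewrite rung_odd //; congr (h (_, _) = (_, _)); apply/eqP; vm_compute.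
exact: fix_level h_aut u0 (fix_middle h_aut u0 u2).
Qed.

Lemma fix_level_down h m : is_aut Gamma_adj h -> fixes_level h m -> fixes_level h (m - 1).
Proof.
move=> h_aut fix_m.
have fix_rung l : h (rung (m, l)) = rung (m, l) by rewrite aut_rung // fix_m.
have u1 : h (m - 1, 1) = (m - 1, 1).
  by have := fix_rung 2; rewrite /rung /=; congr (h (_, _) = (_, _)); apply/eqP; vm_compute.
have u3 : h (succv (succv (m - 1, 1))) = succv (succv (m - 1, 1)).
  by have := fix_rung 6; rewrite /rung /=; congr (h (_, _) = (_, _)); apply/eqP; vm_compute.
exact: fix_level h_aut u1 (fix_middle h_aut u1 u3).
Qed.

Lemma fix_all h : is_aut Gamma_adj h -> h v0 = v0 -> h (succv v0) = succv v0 ->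
  forall x, h x = x.
Proof.
move=> h_aut h0 h1.
have fix0 : fixes_level h 0 by exact: fix_level h_aut h0 h1.
suff fixed (t : nat) : fixes_level h t%:Z /\ fixes_level h (- t%:Z).
  by case=> [[m|m] k]; [exact: (fixed m).1 | rewrite NegzE; exact: (fixed m.+1).2].
elim: t => [|t [fix_t fix_Nt]]; first by rewrite oppr0.
have -> : t.+1%:Z = t%:Z + 1 by lia.
by rewrite opprD; split; [exact: fix_level_up | exact: fix_level_down].
Qed.

Lemma stabilizer h : is_aut Gamma_adj h -> h v0 = v0 ->
  (forall x, h x = x) \/ (forall x, h x = refv x).
Proof.
move=> h_aut h0.
have /adj_nbrs := aut_adj h_aut (adj_succ v0); rewrite h0 !inE => /or3P[] /eqP h1.
- by left; apply: fix_all.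
- right=> x; rewrite -[h x]refvK; congr refv.
  have r_aut := aut_comp refv_rung_aut.1 h_aut.
  have r0 : refv (h v0) = v0 by rewrite h0; apply/eqP; vm_compute.
  have r1 : refv (h (succv v0)) = succv v0 by rewrite h1; apply/eqP; vm_compute.
  exact: (fix_all r_aut r0 r1).
- case: (@rung_off_level v0 (succv v0)) => //; apply: (aut_inj h_aut).
  by rewrite aut_rung // h0 h1.
Qed.

(* The flip followed by a shift squares to the reflection: a square root of the
   non-trivial element of the stabiliser. *)
Definition twistv (u : GVert) : GVert := shiftv 1 (flipv u).

Lemma twistv_square u : twistv (twistv u) = refv u.
Proof.
case: u => n k; rewrite /twistv /shiftv /flipv /refv /=; congr pair; first lia.
rewrite sgn10_succ sgn10N; case: (sgn10_cases n) => ->.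
  by rewrite !mul1r mulN1r opprD addrNK.
by rewrite opprK !mulN1r mul1r -addrA (_ : 5 + 5 = 0) ?addr0 //; apply/eqP; vm_compute.
Qed.

Lemma Gamma_not_cayley : ~ is_cayley_graph Gamma_adj.
Proof.
apply: (@not_cayley_of_square_root _ _ v0 (succv v0) refv twistv).
- exact: aut_comp (shiftv_rung_aut 1).1 flipv_rung_aut.1.
- exact: twistv_square.
- by apply/eqP; vm_compute.
- by move/eqP; vm_compute.
- exact: stabilizer.
Qed.

Theorem theorem1p3 :
  (cubic Gamma_adj /\ two_ended Gamma_adj /\ vertex_transitive Gamma_adj /\
   ~ is_cayley_graph Gamma_adj) /\
  (exists (V : Type) (adj : V -> V -> Prop),
     cubic adj /\ two_ended adj /\ vertex_transitive adj /\ ~ is_cayley_graph adj).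
Proof.
have Gamma_props : cubic Gamma_adj /\ two_ended Gamma_adj /\
    vertex_transitive Gamma_adj /\ ~ is_cayley_graph Gamma_adj.
  by split; [|split; [|split]]; [exact: Gamma_cubic | exact: Gamma_two_ended
    | exact: Gamma_vertex_transitive | exact: Gamma_not_cayley].
by split; [|exists GVert, Gamma_adj].
Qed.
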